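(* Let $n \ge 2$ and let $\mathcal{P} = \langle x, y \mid x^n y^{-2}, R \rangle$, with $R \in F(x,y)$, be a presentation of a group isomorphic to $Q_{4n}$. Then at least one of the following holds: (i) $x \mapsto x$, $y \mapsto y$ induces a group isomorphism from the group presented by $\mathcal{P}$ to $Q_{4n}$; (ii) $x \mapsto xy$, $y \mapsto y$ induces a group isomorphism from the group presented by $\mathcal{P}$ to $Q_{4n}$. Furthermore, if $n = 2$ or $n \not\equiv 2 \pmod 4$, then (i) holds.
   Context: $Q_{4n}$ is identified with $\langle x, y \mid x^n y^{-2}, xyxy^{-1} \rangle$ and $F(x,y)$ is the free group on $x,y$. *)

From mathcomp Require Import all_boot.
Set Implicit Arguments. Unset Strict Implicit. Unset Printing Implicit Defensive.

(* A letter: (generator, inverted?). Generator false = x, true = y. *)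
Definition letter := (bool * bool)%type.
Definition word := seq letter.

Definition gx : word := [:: (false, false)].
Definition gy : word := [:: (true, false)].

Definition inv_letter (a : letter) : letter := (a.1, ~~ a.2).
Definition inv_word (w : word) : word := rev (map inv_letter w).

Inductive rel_eq (rels : seq word) : word -> word -> Prop :=
| re_refl u : rel_eq rels u u
| re_sym u v : rel_eq rels u v -> rel_eq rels v u
| re_trans u v w : rel_eq rels u v -> rel_eq rels v w -> rel_eq rels u w
| re_cancel u v a : rel_eq rels (u ++ [:: a; inv_letter a] ++ v) (u ++ v)
| re_rel u v r : r \in rels -> rel_eq rels (u ++ r ++ v) (u ++ v).

Definition pres_iso (rels1 rels2 : seq word) : Prop :=
  exists f : word -> word,
    [/\ (forall u v, rel_eq rels1 u v -> rel_eq rels2 (f u) (f v)),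
        (forall u v, rel_eq rels2 (f (u ++ v)) (f u ++ f v)),
        (forall u v, rel_eq rels2 (f u) (f v) -> rel_eq rels1 u v) &
        (forall w, exists u, rel_eq rels2 (f u) w)].

Definition subst (s : bool -> word) (w : word) : word :=
  flatten (map (fun a : letter => if a.2 then inv_word (s a.1) else s a.1) w).

Definition induces_iso (rels1 rels2 : seq word) (s : bool -> word) : Prop :=
  [/\ (forall u v, rel_eq rels1 u v -> rel_eq rels2 (subst s u) (subst s v)),
      (forall u v, rel_eq rels2 (subst s u) (subst s v) -> rel_eq rels1 u v) &
      (forall w, exists u, rel_eq rels2 (subst s u) w)].

(* x^n y^-2 *)
Definition rel_xn_ym2 (n : nat) : word :=
  nseq n (false, false) ++ [:: (true, true); (true, true)].
(* x y x y^-1 *)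
Definition rel_xyxyinv : word :=
  [:: (false, false); (true, false); (false, false); (true, true)].

Definition Q4n_rels (n : nat) : seq word := [:: rel_xn_ym2 n; rel_xyxyinv].
Definition P_rels (n : nat) (R : word) : seq word := [:: rel_xn_ym2 n; R].

Definition s_id (b : bool) : word := if b then gy else gx.
Definition s_xy (b : bool) : word := if b then gy else gx ++ gy.

(* Q_4n is modelled by pairs (i, e) in Z_2n * bool standing for x^i y^e. Reducing words to
   the normal forms x^i y^e shows that two words are equal in <x, y | x^n y^-2, xyxy^-1> exactly
   when they evaluate to the same pair, and gives von Dyck's theorem for the model: whenever
   a^n = b^2 and aba = b, the map x^i y^e |-> a^i b^e is an endomorphism.
   An isomorphism from P sends x, y to a generating pair (a, b) of the model with a^n = b^2.
   Sorting a and b into rotations x^i and reflections x^i y, subsets closed under left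
   multiplication by a and b rule out the non-generating configurations, and in the others
   either aba = b, or n = 2 mod 4, n <> 2, and (ab^-1, b) satisfies the relations of Q_4n.
   The endomorphism attached to (a, b), resp. (ab^-1, b), agrees with the given isomorphism on
   the images of the generators under x |-> x, y |-> y, resp. x |-> xy, y |-> y; it is therefore
   onto, hence an automorphism, and the substitution induces an isomorphism. *)

From HB Require Import structures.
From mathcomp Require Import all_boot all_algebra all_fingroup.
From mathcomp Require Import ring zify.
From Stdlib Require Import Setoid Morphisms.
Set Implicit Arguments. Unset Strict Implicit. Unset Printing Implicit Defensive.
Import GRing.Theory.

Section WordCongruence.
Variable rels : seq word.
Local Infix "~" := (rel_eq rels) (at level 70).

#[local] Instance rel_eq_equiv : Equivalence (rel_eq rels).
Proof. by split; [exact: re_refl | exact: re_sym | exact: re_trans]. Qed.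

Lemma rel_eq_ctx p q u v : u ~ v -> p ++ u ++ q ~ p ++ v ++ q.
Proof.
elim=> {u v} [u | u v _ IH | u v w _ IH1 _ IH2 | u v a | u v r r_rel].
- reflexivity.
- by symmetry.
- by transitivity (p ++ v ++ q).
- by have := re_cancel rels (p ++ u) (v ++ q) a; rewrite -!catA.
- by have := re_rel (p ++ u) (v ++ q) r_rel; rewrite -!catA.
Qed.

#[local] Instance cat_rel_eq_proper : Proper (rel_eq rels ==> rel_eq rels ==> rel_eq rels) cat.
Proof.
move=> u u' uu' v v' vv'; transitivity (u' ++ v); first exact: (rel_eq_ctx [::] v uu').
by have := rel_eq_ctx u' [::] vv'; rewrite !cats0.
Qed.

#[local] Instance cons_rel_eq_proper a : Proper (rel_eq rels ==> rel_eq rels) (cons a).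
Proof. by move=> u v uv; have := rel_eq_ctx [:: a] [::] uv; rewrite !cats0. Qed.

Lemma rel_eq_relator r : r \in rels -> r ~ [::].
Proof. by move=> r_rel; have := re_rel [::] [::] r_rel; rewrite cats0. Qed.

Lemma rel_eq_cancel a : [:: a; inv_letter a] ~ [::].
Proof. exact: (re_cancel rels [::] [::] a). Qed.

Lemma inv_letterK : involutive inv_letter.
Proof. by case=> b []. Qed.

Lemma rel_eq_cancel_inv a : [:: inv_letter a; a] ~ [::].
Proof. by have := rel_eq_cancel (inv_letter a); rewrite inv_letterK. Qed.

Lemma inv_word_cons a w : inv_word (a :: w) = inv_word w ++ [:: inv_letter a].
Proof. by rewrite /inv_word /= rev_cons cats1. Qed.

Lemma cat_inv_word w : w ++ inv_word w ~ [::].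
Proof.
elim: w => [|a w IH] /=; first reflexivity.
rewrite inv_word_cons catA.
change (([:: a] ++ (w ++ inv_word w)) ++ [:: inv_letter a] ~ [::]).
rewrite IH; exact: rel_eq_cancel.
Qed.

Lemma inv_wordK : involutive inv_word.
Proof.
by move=> w; rewrite /inv_word map_rev revK -map_comp map_id_in // => a _; rewrite /= inv_letterK.
Qed.

Lemma inv_word_cat w : inv_word w ++ w ~ [::].
Proof. by have := cat_inv_word (inv_word w); rewrite inv_wordK. Qed.

Lemma rel_eq_relator_r u v : u ++ inv_word v \in rels -> u ~ v.
Proof.
move/rel_eq_relator=> uv1; transitivity ((u ++ inv_word v) ++ v).
  by rewrite -catA inv_word_cat cats0; reflexivity.
by rewrite uv1; reflexivity.
Qed.

Lemma rel_eq_catr u v w : u ++ w ~ v ++ w -> u ~ v.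
Proof.
move=> uv; transitivity ((u ++ w) ++ inv_word w).
  by rewrite -catA cat_inv_word cats0; reflexivity.
by rewrite uv -catA cat_inv_word cats0; reflexivity.
Qed.

End WordCongruence.

#[export] Existing Instance rel_eq_equiv.
#[export] Existing Instance cat_rel_eq_proper.
#[export] Existing Instance cons_rel_eq_proper.

Lemma surj_injF (T : finType) (f : T -> T) : (forall y, exists x, f x = y) -> injective f.
Proof.
move=> f_surj; have codomT : codom f =i predT.
  by move=> y; have [x <-] := f_surj y; rewrite codom_f.
have /image_injP f_inj : #|codom f| == #|T| by rewrite (eq_card codomT).
by move=> x y; apply: f_inj.
Qed.

Local Open Scope group_scope.

Lemma gen_mull_closed (gT : finGroupType) (A : {set gT}) (S : {pred gT}) :
  1 \in S -> (forall a p, a \in A -> p \in S -> a * p \in S) -> {subset <<A>> <= S}.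
Proof.
move=> S1 S_mul _ /gen_prodgP[k [c c_A ->]].
by elim/big_rec: _ => // i p _; apply: S_mul.
Qed.

Section TotalMorphism.
Variables (aT rT : finGroupType) (psi : aT -> rT).
Hypothesis psiM : {morph psi : p q / p * q}.
Let Psi := Morphism (in2W psiM : {in [set: aT] &, _}).

Lemma total_morph1 : psi 1 = 1.
Proof. exact: morph1 Psi. Qed.

Lemma total_morphV p : psi p^-1 = (psi p)^-1.
Proof. exact: (morphV Psi (in_setT p)). Qed.

End TotalMorphism.

Section WordEvaluation.
Variable gT : finGroupType.
Implicit Types (g : bool -> gT) (u v w : word).

Definition eval_letter g (a : letter) : gT := if a.2 then (g a.1)^-1 else g a.1.
Definition eval_word g w : gT := \prod_(a <- w) eval_letter g a.

Lemma eval_word_nil g : eval_word g [::] = 1.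
Proof. exact: big_nil. Qed.

Lemma eq_eval_word g g' : g =1 g' -> eval_word g =1 eval_word g'.
Proof. by move=> gg' w; apply: eq_bigr => -[c e] _; rewrite /eval_letter gg'. Qed.

Lemma eval_word_cat g u v : eval_word g (u ++ v) = eval_word g u * eval_word g v.
Proof. exact: big_cat. Qed.

Lemma eval_word_cons g a w : eval_word g (a :: w) = eval_letter g a * eval_word g w.
Proof. exact: big_cons. Qed.

Lemma eval_word1 g a : eval_word g [:: a] = eval_letter g a.
Proof. by rewrite eval_word_cons eval_word_nil mulg1. Qed.

Lemma eval_inv_letter g a : eval_letter g (inv_letter a) = (eval_letter g a)^-1.
Proof. by case: a => b []; rewrite /eval_letter /= ?invgK. Qed.

Lemma eval_inv_word g w : eval_word g (inv_word w) = (eval_word g w)^-1.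
Proof.
elim: w => [|a w IH]; first by rewrite eval_word_nil invg1.
by rewrite inv_word_cons eval_word_cat eval_word1 eval_inv_letter IH eval_word_cons invMg.
Qed.

Lemma eval_subst g s w : eval_word g (subst s w) = eval_word (fun b => eval_word g (s b)) w.
Proof.
elim: w => [|a w IH]; first by rewrite !eval_word_nil.
rewrite /subst /= eval_word_cat -/(subst s w) IH eval_word_cons.
by case: a => b [] //=; rewrite eval_inv_word.
Qed.

Lemma morph_eval_word (psi : gT -> gT) g w : {morph psi : p q / p * q} ->
  psi (eval_word g w) = eval_word (psi \o g) w.
Proof.
move=> psiM; elim: w => [|a w IH]; first by rewrite !eval_word_nil (total_morph1 psiM).
rewrite !eval_word_cons psiM IH.
by case: a => b [] //=; rewrite /eval_letter /= (total_morphV psiM).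
Qed.

Lemma eval_word_rel_eq rels g u v : {in rels, forall r, eval_word g r = 1} ->
  rel_eq rels u v -> eval_word g u = eval_word g v.
Proof.
move=> rels1; elim=> {u v} [// | u v _ -> // | u v w _ -> _ -> // | u v a | u v r /rels1 r1].
  by rewrite !eval_word_cat eval_word_cons eval_word1 eval_inv_letter mulgV mul1g.
by rewrite !eval_word_cat r1 mul1g.
Qed.

Lemma eval_word_mem_gen g w : eval_word g w \in <<[set g false; g true]>>.
Proof.
elim: w => [|[b e] w IH]; first by rewrite eval_word_nil group1.
rewrite eval_word_cons groupM // /eval_letter /= ?groupV; case: e; rewrite ?groupV;
  by apply: mem_gen; case: b; rewrite !inE eqxx ?orbT.
Qed.

Lemma word_morph_eval (phi : word -> gT) :
  (forall u v, phi (u ++ v) = phi u * phi v) -> (forall a, phi [:: a; inv_letter a] = phi [::]) ->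
  forall w, phi w = eval_word (fun b => phi [:: (b, false)]) w.
Proof.
move=> phiM phi_cancel; have phi_nil : phi [::] = 1.
  by apply: (mulgI (phi [::])); rewrite -phiM mulg1.
elim=> [|[b e] w IH]; first by rewrite phi_nil eval_word_nil.
rewrite -cat1s phiM IH eval_word_cons; congr (_ * _); case: e => //=.
by apply/esym/eqP; rewrite eq_invg_mul -phiM phi_cancel phi_nil.
Qed.

Lemma eval_word_nseq g c k : eval_word g (nseq k (c, false)) = g c ^+ k.
Proof. by elim: k => [|k IH]; rewrite ?eval_word_nil // eval_word_cons IH expgS. Qed.

Lemma rel_eq_nf_inv rels (nf : gT -> word) g c :
  (forall p, rel_eq rels ((c, false) :: nf p) (nf (g c * p))) ->
  forall p, rel_eq rels ((c, true) :: nf p) (nf ((g c)^-1 * p)).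
Proof.
move=> step p; rewrite -{1}[p](mulKVg (g c)).
transitivity ([:: (c, true)] ++ ((c, false) :: nf ((g c)^-1 * p))).
  by rewrite step; reflexivity.
exact: (rel_eq_ctx [::] _ (rel_eq_cancel_inv rels (c, false))).
Qed.

Definition Q4n_pair n (a b : gT) := a ^+ n = b ^+ 2 /\ a * b * a = b.

Lemma eval_rel_xn_ym2 g n : eval_word g (rel_xn_ym2 n) = g false ^+ n * (g true ^+ 2)^-1.
Proof. by rewrite eval_word_cat eval_word_nseq !eval_word_cons eval_word_nil mulg1 -invMg. Qed.

Lemma Q4n_rels_eval g n :
  Q4n_pair n (g false) (g true) -> {in Q4n_rels n, forall r, eval_word g r = 1}.
Proof.
case=> rel1 rel2 r; rewrite !inE => /orP[] /eqP ->; first by rewrite eval_rel_xn_ym2 rel1 mulgV.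
by rewrite !eval_word_cons eval_word_nil mulg1 /= !mulgA rel2 mulgV.
Qed.

End WordEvaluation.

Definition dicyclic (n : nat) := ('Z_(n.*2) * bool)%type.
HB.instance Definition _ n := Finite.on (dicyclic n).

Section DicyclicLaw.
Variable n : nat.
Local Open Scope ring_scope.
Local Notation N := (n%:R : 'Z_(n.*2)).

Lemma halfturn_add : N + N = 0.
Proof. by rewrite -natrD addnn; case: n => [|m] //; rewrite pchar_Zp. Qed.

Lemma addr_halfturn2 (i : 'Z_(n.*2)) : i + N + N = i.
Proof. by rewrite -addrA halfturn_add addr0. Qed.

(* The product of x^i y^e, forced by y x = x^-1 y and y^2 = x^n; the pairs (i, false) are the
   rotations, the pairs (i, true) the reflections. *)
Definition dic_mul (p q : dicyclic n) : dicyclic n :=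
  (p.1 + (if p.2 then - q.1 else q.1) + (if p.2 && q.2 then N else 0), p.2 (+) q.2).
Definition dic_one : dicyclic n := (0, false).
Definition dic_inv (p : dicyclic n) : dicyclic n := (if p.2 then p.1 + N else - p.1, p.2).

(* ring does not know that N + N = 0; adding N + N to one side is always enough here. *)
Local Ltac halfturn_ring :=
  first [ring | rewrite -[LHS]addr_halfturn2; ring | rewrite -[RHS]addr_halfturn2; ring].

Lemma dic_mulA : associative dic_mul.
Proof. by case=> [i [] ] [j [] ] [k [] ]; congr pair; rewrite /= ?addr0 //; halfturn_ring. Qed.

Lemma dic_mul1 : left_id dic_one dic_mul.
Proof. by case=> [i [] ]; congr pair; rewrite /=; ring. Qed.

Lemma dic_mulV : left_inverse dic_one dic_inv dic_mul.
Proof. by case=> [i [] ]; congr pair; rewrite /=; halfturn_ring. Qed.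

End DicyclicLaw.

HB.instance Definition _ n :=
  Finite_isGroup.Build (dicyclic n) (@dic_mulA n) (@dic_mul1 n) (@dic_mulV n).

Section Dicyclic.
Variable n : nat.
Local Notation N := (n%:R : 'Z_(n.*2))%R.
Implicit Types (p q a b : dicyclic n) (i j : 'Z_(n.*2)).

Definition dic_rot i : dicyclic n := (i, false).
Definition dic_refl i : dicyclic n := (i, true).
(* In group_scope a bare 1 : 'Z_(n.*2) would be the unit of its additive group, i.e. 0. *)
Definition dic_x := dic_rot 1%R.
Definition dic_y := dic_refl 0%R.
Definition dic_gen (b : bool) : dicyclic n := if b then dic_y else dic_x.

Lemma dic_mulE p q :
  p * q = ((p.1 + (if p.2 then - q.1 else q.1) + (if p.2 && q.2 then N else 0))%R, p.2 (+) q.2).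
Proof. by []. Qed.

Lemma dic_invE p : p^-1 = ((if p.2 then p.1 + N else - p.1)%R, p.2).
Proof. by []. Qed.

Lemma rot_mulE i j e : dic_rot i * (j, e) = ((i + j)%R, e).
Proof. by rewrite dic_mulE; congr pair; exact: addr0. Qed.

Lemma refl_mulE i j e : dic_refl i * (j, e) = (if e then (i - j + N)%R else (i - j)%R, ~~ e).
Proof. by rewrite dic_mulE; case: e; congr pair; exact: addr0. Qed.

Lemma dic_expg_snd p k : (p ^+ k).2 = p.2 && odd k.
Proof. by elim: k => [|k IH]; rewrite ?andbF // expgS dic_mulE /= IH; case: p.2. Qed.

Lemma expg_rot i k : dic_rot i ^+ k = dic_rot (k%:R * i)%R.
Proof.
elim: k => [|k IH]; first by rewrite mul0r.
by rewrite expgS IH dic_mulE /= addr0 mulrSr mulrDl mul1r addrC.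
Qed.

Lemma expg_x k : dic_x ^+ k = dic_rot k%:R%R.
Proof. by rewrite expg_rot mulr1. Qed.

Lemma expg_xV k : dic_x^-1 ^+ k = dic_rot (- k%:R)%R.
Proof. by rewrite dic_invE expg_rot mulrN1. Qed.

Lemma refl_sqr i : dic_refl i ^+ 2 = dic_rot N.
Proof. by rewrite expgS expg1 dic_mulE /= addrN add0r. Qed.

Lemma expg_refl_double i k : dic_refl i ^+ k.*2 = dic_rot (k%:R * N)%R.
Proof. by rewrite -mul2n expgM refl_sqr expg_rot. Qed.

Lemma refl_mulV i j : dic_refl i * (dic_refl j)^-1 = dic_rot (i - j)%R.
Proof. by rewrite dic_invE dic_mulE /=; congr pair; ring. Qed.

Lemma mulrn_halfturn k : (k%:R * N = if odd k then N else 0)%R.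
Proof.
elim: k => [|k IH]; first by rewrite mul0r.
by rewrite mulrS mulrDl mul1r IH /=; case: (odd k); rewrite ?halfturn_add ?addr0.
Qed.

Lemma rot_refl_rel i j : dic_rot i * dic_refl j * dic_rot i = dic_refl j.
Proof. by rewrite !dic_mulE /=; congr pair; ring. Qed.

Lemma refl_rot_rel i j : dic_rot j ^+ 2 = dic_rot N ->
  dic_refl i * dic_rot j * dic_refl i = dic_rot j.
Proof.
rewrite expg_rot => -[j2]; rewrite !dic_mulE /=; congr pair.
by rewrite -j2; ring.
Qed.

Lemma rot_pair_not_gen i j : <<[set dic_rot i; dic_rot j]>> != [set: dicyclic n].
Proof.
apply/eqP => gen_ij.
have /(_ dic_y) : {subset <<[set dic_rot i; dic_rot j]>> <= [pred p | ~~ p.2]}.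
  by apply: gen_mull_closed => // a p; rewrite !inE => /orP[] /eqP ->.
by rewrite gen_ij in_setT => /(_ isT).
Qed.

Hypothesis n_gt0 : 0 < n.

Lemma natr_Zp_eqmod k l : (k%:R = l%:R :> 'Z_(n.*2))%R -> k = l %[mod n.*2].
Proof. by move/(congr1 (@nat_of_ord _)); rewrite !val_Zp_nat //; lia. Qed.

Lemma natr_Zp_neq0 k : 0 < k < n.*2 -> (k%:R != 0 :> 'Z_(n.*2))%R.
Proof.
case/andP=> k_gt0 k_lt; apply/eqP => k0; have := natr_Zp_eqmod (l := 0) k0.
by rewrite mod0n modn_small //; lia.
Qed.

Lemma halfturn_neq0 : (N != 0)%R.
Proof. by apply: natr_Zp_neq0; lia. Qed.

Lemma expg_refl_even i : ~~ odd n -> dic_refl i ^+ n = dic_rot (if odd n./2 then N else 0%R).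
Proof.
move=> n_even; rewrite -mulrn_halfturn -(expg_refl_double i); congr (_ ^+ _).
by have := odd_double_half n; rewrite (negbTE n_even) add0n => ->.
Qed.

Lemma refl_pow_even i a : dic_refl i ^+ n = a ^+ 2 -> ~~ odd n.
Proof. by move/(congr1 snd); rewrite !dic_expg_snd /= andbF; case: (odd n). Qed.

Lemma refl_rot_not_gen i j : n != 2 -> dic_refl i ^+ n = dic_rot j ^+ 2 ->
  <<[set dic_refl i; dic_rot j]>> != [set: dicyclic n].
Proof.
move=> n_neq2 rel_ij; have n_even := refl_pow_even rel_ij.
move: rel_ij; rewrite expg_refl_even // expg_rot => -[half_j].
have j4 : (4%:R * j = 0)%R.
  have -> : (4%:R * j = 2%:R * (2%:R * j))%R by ring.
  by rewrite -half_j; case: ifP; rewrite ?mulr0 // mulr2n mulrDl mul1r halfturn_add.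
have N4 : (4%:R * N = 0)%R.
  have -> : (4%:R * N = 2%:R * (N + N))%R by ring.
  by rewrite halfturn_add mulr0.
apply/eqP => gen_ij.
have : {subset <<[set dic_refl i; dic_rot j]>> <=
          [pred p | 4%:R * p.1 == if p.2 then 4%:R * i else 0]%R}.
  apply: gen_mull_closed => [|a [k e]]; first by rewrite inE /= mulr0.
  rewrite !inE => /orP[] /eqP -> /eqP k4; rewrite dic_mulE /=; apply/eqP;
  by case: e k4 => /= k4; rewrite ?addr0 mulrDr ?mulrDr ?mulrN k4 ?j4 ?N4; ring.
move=> /(_ dic_x); rewrite gen_ij in_setT inE /= mulr1 => /(_ isT) /eqP four0.
have /natr_Zp_neq0 : (0 < 4 < n.*2)%N by lia.
by rewrite four0.
Qed.

Lemma refl_pair_gen i j : <<[set dic_refl i; dic_refl j]>> = [set: dicyclic n] ->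
  dic_refl i ^+ n = dic_refl j ^+ 2 -> n %% 4 = 2 /\ ((i - j) * N = N)%R.
Proof.
move=> gen_ij rel_ij; have n_even := refl_pow_even rel_ij.
move: rel_ij; rewrite expg_refl_even // refl_sqr.
case: ifP => [half_odd _ | _ [/esym/eqP]]; last by rewrite (negbTE halfturn_neq0).
split; first lia.
have NN0 : (N * N = 0)%R by rewrite mulrn_halfturn (negbTE n_even).
have := mulrn_halfturn (val (i - j)%R); rewrite natr_Zp.
case: ifP => _ ijN //.
have iNjN : (i * N = j * N)%R by apply/eqP; rewrite -subr_eq0 -mulrBl ijN.
have : {subset <<[set dic_refl i; dic_refl j]>> <=
          [pred p | p.1 * N == if p.2 then j * N else 0]%R}.
  apply: gen_mull_closed => [|a [k e]]; first by rewrite inE /= mul0r.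
  rewrite !inE => /orP[] /eqP -> /eqP kN; rewrite dic_mulE /=; apply/eqP;
  by case: e kN => /= kN; rewrite ?addr0 !mulrDl ?mulNr kN ?iNjN ?NN0; ring.
move=> /(_ dic_x); rewrite gen_ij in_setT inE /= mul1r => /(_ isT).
by rewrite (negbTE halfturn_neq0).
Qed.

Lemma refl_pair_rel i j : n = 2 -> ((i - j) * N = N)%R ->
  dic_refl i * dic_refl j * dic_refl i = dic_refl j.
Proof.
move=> n2 ijN; have N2 : N = 2%:R%R by congr (_%:R%R).
rewrite {1}N2 in ijN; rewrite !dic_mulE /=; congr pair.
apply/eqP; rewrite -subr_eq0; apply/eqP; transitivity ((i - j) * 2%:R + N)%R; first ring.
by rewrite ijN halfturn_add.
Qed.

Lemma dic_generating_pair a b : <<[set a; b]>> = [set: dicyclic n] -> a ^+ n = b ^+ 2 ->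
  Q4n_pair n a b \/ [/\ n %% 4 = 2, n != 2 & Q4n_pair n (a * b^-1) b].
Proof.
case: a b => [i [] ] [j [] ] gen_ab rel_ab.
- have [n_mod4 ijN] := refl_pair_gen gen_ab rel_ab.
  have [n2 | n_neq2] := eqVneq n 2; first by left; split=> //; apply: refl_pair_rel.
  right; split=> //; rewrite refl_mulV; split; last exact: rot_refl_rel.
  by rewrite expg_rot mulrC ijN refl_sqr.
- have [n2 | n_neq2] := eqVneq n 2; last first.
    by have := refl_rot_not_gen n_neq2 rel_ab; rewrite gen_ab eqxx.
  left; split=> //; apply: refl_rot_rel.
  by rewrite -rel_ab -(refl_sqr i); congr (_ ^+ _).
- by left; split=> //; apply: rot_refl_rel.
- by have := rot_pair_not_gen i j; rewrite gen_ab eqxx.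
Qed.

End Dicyclic.

Section QuaternionPresentation.
Variable n : nat.
Hypothesis n_gt0 : 0 < n.
Local Notation Q := (Q4n_rels n).
Local Infix "~" := (rel_eq Q) (at level 70).
Local Notation xl := (false, false).
Local Notation xi := (false, true).
Local Notation yl := (true, false).
Implicit Types (p q : dicyclic n).

Definition dic_eval : word -> dicyclic n := eval_word (@dic_gen n).
Definition xpow k : word := nseq k xl.
Definition dic_nf p : word := xpow (val p.1) ++ nseq p.2 yl.
Definition dic_map (a b : dicyclic n) p : dicyclic n := a ^+ val p.1 * b ^+ p.2.

Lemma dic_nfE i e : dic_nf (i, e) = xpow (val i) ++ nseq e yl.
Proof. by []. Qed.

Lemma eval_dic_nf (gT : finGroupType) (g : bool -> gT) p :
  eval_word g (dic_nf p) = g false ^+ val p.1 * g true ^+ p.2.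
Proof. by rewrite eval_word_cat !eval_word_nseq. Qed.

Lemma dic_map_xy p : dic_map (dic_x n) (dic_y n) p = p.
Proof.
case: p => i []; rewrite /dic_map expg_x natr_Zp /= ?mulg1 //.
by rewrite expg1 rot_mulE addr0.
Qed.

Lemma dic_eval_nf p : dic_eval (dic_nf p) = p.
Proof. by rewrite /dic_eval eval_dic_nf; exact: dic_map_xy. Qed.

Lemma Q4n_ysqr : [:: yl; yl] ~ xpow n.
Proof. by symmetry; apply: rel_eq_relator_r; rewrite mem_head. Qed.

Lemma Q4n_yx : [:: yl; xl] ~ [:: xi; yl].
Proof.
have xyx : [:: xl; yl; xl] ~ [:: yl] by apply: rel_eq_relator_r; rewrite !inE eqxx orbT.
transitivity ([:: xi; xl] ++ [:: yl; xl]).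
  by rewrite (rel_eq_cancel_inv _ xl); reflexivity.
by change ([:: xi] ++ [:: xl; yl; xl] ~ [:: xi] ++ [:: yl]); rewrite xyx; reflexivity.
Qed.

Lemma Q4n_y_xpow k : yl :: xpow k ~ nseq k xi ++ [:: yl].
Proof.
elim: k => [|k IH]; first reflexivity.
transitivity ([:: yl; xl] ++ xpow k); first reflexivity.
by rewrite Q4n_yx /= IH; reflexivity.
Qed.

Lemma Q4n_xpow_double : xpow n.*2 ~ [::].
Proof.
have inv_xpow : inv_word (xpow n) = nseq n xi by rewrite /inv_word map_nseq rev_nseq.
have : nseq n xi ++ [:: yl] ~ xpow n ++ [:: yl].
  by rewrite -Q4n_y_xpow -Q4n_ysqr; reflexivity.
move/rel_eq_catr => xi_x; rewrite -addnn /xpow nseqD -/(xpow n).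
transitivity (xpow n ++ nseq n xi); first by rewrite xi_x; reflexivity.
by rewrite -inv_xpow; exact: cat_inv_word.
Qed.

Lemma Q4n_xpow_mod k : xpow k ~ xpow (k %% n.*2).
Proof.
have xpow_mul m : xpow (m * n.*2) ~ [::].
  elim: m => [|m IH]; first reflexivity.
  by rewrite mulSn /xpow nseqD -!/(xpow _) IH Q4n_xpow_double; reflexivity.
by rewrite {1}(divn_eq k n.*2) /xpow nseqD -!/(xpow _) xpow_mul; reflexivity.
Qed.

Lemma Q4n_xpow_eq k l : (k%:R = l%:R :> 'Z_(n.*2))%R -> xpow k ~ xpow l.
Proof. by move/(natr_Zp_eqmod n_gt0) => kl; rewrite Q4n_xpow_mod kl -Q4n_xpow_mod; reflexivity. Qed.

Lemma Q4n_nf_x p : xl :: dic_nf p ~ dic_nf (dic_x n * p).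
Proof.
case: p => i e; rewrite rot_mulE !dic_nfE -cat_cons.
have -> : xl :: xpow (val i) = xpow (val i).+1 by [].
by rewrite (@Q4n_xpow_eq _ (val (1 + i)%R)); [reflexivity | rewrite mulrS !natr_Zp].
Qed.

Lemma Q4n_nf_xpow k p : xpow k ++ dic_nf p ~ dic_nf (dic_x n ^+ k * p).
Proof.
elim: k => [|k IH]; first by rewrite mul1g; reflexivity.
by rewrite expgS -mulgA -Q4n_nf_x -IH; reflexivity.
Qed.

Lemma Q4n_nf_xipow k p : nseq k xi ++ dic_nf p ~ dic_nf ((dic_x n)^-1 ^+ k * p).
Proof.
elim: k => [|k IH]; first by rewrite mul1g; reflexivity.
by rewrite expgS -mulgA -(rel_eq_nf_inv Q4n_nf_x) -IH; reflexivity.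
Qed.

Lemma Q4n_nf_y p : yl :: dic_nf p ~ dic_nf (dic_y n * p).
Proof.
case: p => i e.
have -> : dic_y n * (i, e) = (dic_x n)^-1 ^+ val i * (if e then dic_x n ^+ n else dic_y n).
  by rewrite expg_xV expg_x natr_Zp refl_mulE; case: e; rewrite rot_mulE sub0r ?addr0.
rewrite -Q4n_nf_xipow dic_nfE -cat_cons Q4n_y_xpow -catA.
apply: cat_rel_eq_proper; first reflexivity.
case: e; last reflexivity.
by rewrite -[dic_x n ^+ n]mulg1 -Q4n_nf_xpow -Q4n_ysqr; reflexivity.
Qed.

Lemma Q4n_nf_letter a p : a :: dic_nf p ~ dic_nf (eval_letter (@dic_gen n) a * p).
Proof.
case: a => [[] []]; [exact: (rel_eq_nf_inv Q4n_nf_y) | exact: Q4n_nf_y |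
                    exact: (rel_eq_nf_inv Q4n_nf_x) | exact: Q4n_nf_x].
Qed.

Lemma Q4n_nf w : w ~ dic_nf (dic_eval w).
Proof.
elim: w => [|a w IH]; first by rewrite /dic_eval eval_word_nil; reflexivity.
by rewrite [dic_eval _]eval_word_cons {1}IH Q4n_nf_letter; reflexivity.
Qed.

Lemma dic_Q4n_pair : Q4n_pair n (dic_x n) (dic_y n).
Proof. by split; [rewrite expg_x refl_sqr | exact: rot_refl_rel]. Qed.

Lemma Q4n_rel_eqE u v : u ~ v <-> dic_eval u = dic_eval v.
Proof.
split; first exact/eval_word_rel_eq/Q4n_rels_eval/dic_Q4n_pair.
by move=> uv; rewrite (Q4n_nf u) (Q4n_nf v) uv; reflexivity.
Qed.

Lemma dic_map_morph (a b : dicyclic n) : Q4n_pair n a b -> {morph dic_map a b : p q / p * q}.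
Proof.
move=> ab p q; pose g c := if c then b else a.
have nfE r : dic_map a b r = eval_word g (dic_nf r) by rewrite eval_dic_nf.
rewrite !nfE -eval_word_cat; apply: (eval_word_rel_eq (Q4n_rels_eval ab)).
by apply/Q4n_rel_eqE; rewrite /dic_eval eval_word_cat -!/(dic_eval _) !dic_eval_nf.
Qed.

Lemma dic_map_x (a b : dicyclic n) : dic_map a b (dic_x n) = a.
Proof. by rewrite /dic_map /= modn_small // expg1 mulg1. Qed.

Lemma dic_map_y (a b : dicyclic n) : dic_map a b (dic_y n) = b.
Proof. by rewrite /dic_map /= expg1 mul1g. Qed.

End QuaternionPresentation.

Lemma pres_iso_dic_eval n rels : 0 < n -> pres_iso rels (Q4n_rels n) ->
  exists phi : word -> dicyclic n, [/\ forall u v, rel_eq rels u v <-> phi u = phi v,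
     forall u v, phi (u ++ v) = phi u * phi v & forall p, exists w, phi w = p].
Proof.
move=> n_gt0 [f [fP fM fQ f_surj]]; exists (dic_eval n \o f); split=> /=.
- by move=> u v; rewrite -Q4n_rel_eqE //; split; [exact: fP | exact: fQ].
- by move=> u v; rewrite /dic_eval -eval_word_cat; apply/Q4n_rel_eqE.
- move=> p; have [w /(Q4n_rel_eqE n_gt0) fw] := f_surj (dic_nf p).
  by exists w; rewrite fw dic_eval_nf.
Qed.

Section DicyclicPresentation.
Variables (n : nat) (rels : seq word) (phi : word -> dicyclic n).
Hypothesis n_gt0 : 0 < n.
Hypothesis rel_xn_ym2_in : rel_xn_ym2 n \in rels.
Hypothesis phi_rel_eq : forall u v, rel_eq rels u v <-> phi u = phi v.
Hypothesis phiM : forall u v, phi (u ++ v) = phi u * phi v.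
Hypothesis phi_surj : forall p, exists w, phi w = p.

Let g (c : bool) := phi [:: (c, false)].

Lemma phi_eval w : phi w = eval_word g w.
Proof. by apply: word_morph_eval => // a; apply/phi_rel_eq/rel_eq_cancel. Qed.

Lemma phi_gen : <<[set g false; g true]>> = [set: dicyclic n].
Proof.
apply/setP => p; rewrite in_setT; have [w <-] := phi_surj p.
by rewrite phi_eval eval_word_mem_gen.
Qed.

Lemma phi_rel : g false ^+ n = g true ^+ 2.
Proof.
have : phi (rel_xn_ym2 n) = phi [::] by apply/phi_rel_eq/rel_eq_relator.
rewrite !phi_eval eval_rel_xn_ym2 eval_word_nil => rel1.
by rewrite -(mulgKV (g true ^+ 2) (g false ^+ n)) rel1 mul1g.
Qed.

Lemma induces_iso_of_morph (s : bool -> word) (psi : dicyclic n -> dicyclic n) :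
  {morph psi : p q / p * q} -> (forall c, psi (dic_eval n (s c)) = g c) ->
  induces_iso rels (Q4n_rels n) s.
Proof.
move=> psiM psi_s.
have phiE w : phi w = psi (dic_eval n (subst s w)).
  rewrite phi_eval /dic_eval eval_subst (morph_eval_word _ _ psiM).
  by apply: eq_eval_word => c; rewrite -psi_s.
have psi_surj q : exists p, psi p = q.
  by have [w <-] := phi_surj q; exists (dic_eval n (subst s w)).
have psi_inj := surj_injF psi_surj.
split.
- by move=> u v /phi_rel_eq; rewrite !phiE => /psi_inj /(Q4n_rel_eqE n_gt0).
- by move=> u v /(Q4n_rel_eqE n_gt0) uv; apply/phi_rel_eq; rewrite !phiE uv.
- move=> w; have [u phi_u] := phi_surj (psi (dic_eval n w)); exists u.
  by apply/(Q4n_rel_eqE n_gt0)/psi_inj; rewrite -phiE.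
Qed.

Lemma presentation_cases : induces_iso rels (Q4n_rels n) s_id \/
  [/\ n %% 4 = 2, n != 2 & induces_iso rels (Q4n_rels n) s_xy].
Proof.
have [ab | [n_mod4 n_neq2 ab]] := dic_generating_pair n_gt0 phi_gen phi_rel.
  left; apply: (induces_iso_of_morph (dic_map_morph n_gt0 ab)) => -[];
  by rewrite /dic_eval eval_word1 /= ?dic_map_x ?dic_map_y.
right; split=> //; apply: (induces_iso_of_morph (dic_map_morph n_gt0 ab)) => -[];
rewrite /dic_eval ?eval_word_cat !eval_word1 /= ?(dic_map_morph n_gt0 ab);
by rewrite ?dic_map_x ?dic_map_y ?mulgKV.
Qed.

End DicyclicPresentation.

Theorem lemma3p14 (n : nat) (R : word) :
  2 <= n ->
  pres_iso (P_rels n R) (Q4n_rels n) ->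
  (induces_iso (P_rels n R) (Q4n_rels n) s_id \/
   induces_iso (P_rels n R) (Q4n_rels n) s_xy) /\
  ((n == 2) || (n %% 4 != 2) -> induces_iso (P_rels n R) (Q4n_rels n) s_id).
Proof.
move=> n_ge2; have n_gt0 : 0 < n by apply: ltnW.
case/(pres_iso_dic_eval n_gt0) => phi [phi_rel_eq phiM phi_surj].
have [iso_id | [n_mod4 n_neq2 iso_xy]] :=
  presentation_cases n_gt0 (mem_head _ _) phi_rel_eq phiM phi_surj.
  by split; [left | ].
by split; [right | rewrite n_mod4 (negbTE n_neq2)].
Qed.
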